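(* Consider the discrete first-price auction in the model without ties, with values drawn i.i.d. from a distribution with full support on $X$. Let $\beta$ be a symmetric equilibrium (SE) bidding function, let $v\in X$ with $v+1\in X$, and let $b=\beta(v)$. Then $\beta(v+1)\le b+1$.
   Context: Model. There are $n\ge 2$ risk-neutral bidders competing for one indivisible object. Normalise the grid so that values and bids lie in $X=\{0,1,2,\dots,x\}$ for some $x\in\mathbb N$. Each bidder $i$ privately learns a value $v_i\in X$; values are drawn independently from a common distribution in which every element of $X$ has strictly positive probability. Each bidder submits a bid $b_i\in X$. A (pure) strategy is a bidding function $\beta:X\to X$. In the model without ties, bidder $i$ wins iff $b_i>b_j$ for all $j\neq i$ (if the highest bid is tied, nobody wins). In the first-price auction, a bidder with value $v_i$ bidding $b_i$ gets expected payoff $(v_i-b_i)\Pr(i\text{ wins})$. An equilibrium is a profile of bidding functions such that each bidder's bidding function maximises their expected payoff given the others' bidding functions (a pure-strategy Bayes–Nash equilibrium) and such that no bidder uses a weakly dominated bidding function (a bidding function is weakly dominated if some other bidding function yields at least as high expected payoff against every profile of opponents' bidding functions, and strictly higher against some). A symmetric equilibrium (SE) is an equilibrium in which all bidders use the same bidding function $\beta$. *)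

From mathcomp Require Import all_boot all_order all_algebra.
Set Implicit Arguments. Unset Strict Implicit. Unset Printing Implicit Defensive.
Import Order.TTheory GRing.Theory Num.Theory.
Local Open Scope ring_scope.

(* The grid X = {0,...,x} is 'I_(x.+1). *)
Definition bidfun (x : nat) := 'I_(x.+1) -> 'I_(x.+1).

Definition profile (n x : nat) := 'I_n -> bidfun x.

Definition upd (n x : nat) (B : profile n x) (i : 'I_n) (b : bidfun x)
  : profile n x := fun j => if j == i then b else B j.

Definition prob_below (R : realFieldType) (x : nat) (p : 'I_(x.+1) -> R)
  (bj : bidfun x) (c : 'I_(x.+1)) : R :=
  \sum_(w : 'I_(x.+1) | (bj w < c)%N) p w.

(* Probability that bidder i, bidding c, wins (strictly highest bid; values
   are independent, so this is the product over opponents). *)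
Definition win_prob (R : realFieldType) (n x : nat) (p : 'I_(x.+1) -> R)
  (B : profile n x) (i : 'I_n) (c : 'I_(x.+1)) : R :=
  \prod_(j < n | j != i) prob_below p (B j) c.

Definition payoff (R : realFieldType) (n x : nat) (p : 'I_(x.+1) -> R)
  (B : profile n x) (i : 'I_n) : R :=
  \sum_(v : 'I_(x.+1))
     p v * (((v : nat)%:R - (B i v : nat)%:R) * win_prob p B i (B i v)).

Definition weakly_dominated (R : realFieldType) (n x : nat)
  (p : 'I_(x.+1) -> R) (i : 'I_n) (b : bidfun x) : Prop :=
  exists b' : bidfun x,
    (forall B : profile n x, payoff p (upd B i b) i <= payoff p (upd B i b') i)
    /\ (exists B : profile n x, payoff p (upd B i b) i < payoff p (upd B i b') i).

Definition equilibrium (R : realFieldType) (n x : nat) (p : 'I_(x.+1) -> R)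
  (B : profile n x) : Prop :=
  (forall (i : 'I_n) (b' : bidfun x), payoff p (upd B i b') i <= payoff p B i)
  /\ (forall i : 'I_n, ~ weakly_dominated p i (B i)).

Definition symmetric_equilibrium (R : realFieldType) (n x : nat)
  (p : 'I_(x.+1) -> R) (beta : bidfun x) : Prop :=
  equilibrium p (fun _ : 'I_n => beta).

From mathcomp Require Import all_boot all_order all_algebra.
From mathcomp Require Import lra.
Import Order.TTheory GRing.Theory Num.Theory.
Local Open Scope ring_scope.

(* Fix a bidder i and let W c be her probability of winning with
   bid c when all opponents use beta.  Since every value has positive
   probability, the equilibrium condition forces every bid beta w to be
   pointwise optimal: (w - c) W c <= (w - beta w) W (beta w) for all c.
   W is nondecreasing, positive as soon as some value bids below c, and
   depends on c only through the set of values bidding below c.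
   The first section shows, for an abstract such W, that pointwise
   optimality makes beta nondecreasing (a single-crossing argument) and
   forbids jumps of two or more: if beta (v+1) >= beta v + 2, then bidding
   beta v + 1 at value v+1 wins with the same positive probability
   (no value bids in between) at a lower price. *)

Section OptimalBidding.

Context {R : realFieldType} {x : nat}.
Implicit Types (w c : 'I_(x.+1)).

Context {beta : 'I_(x.+1) -> 'I_(x.+1)} {W : 'I_(x.+1) -> R}.

Hypothesis opt : forall w c,
  ((w : nat)%:R - (c : nat)%:R) * W c
    <= ((w : nat)%:R - (beta w : nat)%:R) * W (beta w).
Hypothesis W_mono : forall c c', (c <= c')%N -> W c <= W c'.
Hypothesis W_pos : forall c w, (beta w < c)%N -> 0 < W c.
Hypothesis W_ext : forall c c',
  (forall w, (beta w < c)%N = (beta w < c')%N) -> W c = W c'.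

(* Among two bids with the same positive winning probability the cheaper
   one is strictly better, so an optimal bid is never the dearer one. *)
Lemma optimal_not_dearer {w c} :
  (c < beta w)%N -> W c = W (beta w) -> 0 < W c -> False.
Proof.
move=> lt_c eqW W_gt0; have := opt w c; rewrite -eqW.
have : ((c : nat)%:R + 1 <= (beta w : nat)%:R :> R) by rewrite natr1 ler_nat.
move: W_gt0; move: (W c) ((c : nat)%:R) ((beta w : nat)%:R) ((w : nat)%:R).
by move=> Y a b u; nra.
Qed.

Lemma optimal_bid_mono {w w'} : (w <= w')%N -> (beta w <= beta w')%N.
Proof.
move=> le_ww'; rewrite leqNgt; apply/negP => lt_b.
have W_gt0 := W_pos _ _ lt_b.
have le_W := W_mono _ _ (ltnW lt_b).
have lt_ww' : (w < w')%N.
  by rewrite ltn_neqAle le_ww' andbT; apply: contraTneq lt_b => /val_inj ->; rewrite ltnn.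
(* Adding the optimality conditions of w and w' against each other's bids
   gives W (beta w) <= W (beta w'), hence equality. *)
have eqW : W (beta w') = W (beta w).
  apply/eqP; rewrite eq_le le_W /=.
  have := opt w (beta w'); have := opt w' (beta w).
  have : ((w : nat)%:R + 1 <= (w' : nat)%:R :> R) by rewrite natr1 ler_nat.
  move: W_gt0; move: (W (beta w)) (W (beta w')) ((w : nat)%:R) ((w' : nat)%:R).
  move: ((beta w : nat)%:R) ((beta w' : nat)%:R) => a b Y X u u'; nra.
by apply: (optimal_not_dearer lt_b eqW); rewrite eqW.
Qed.

Lemma optimal_bid_step (v v1 : 'I_(x.+1)) :
  (v1 : nat) = (v : nat).+1 -> (beta v1 <= (beta v).+1)%N.
Proof.
move=> ev1; rewrite leqNgt; apply/negP => lt_b.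
have lt_c : ((beta v).+1 < x.+1)%N by apply: ltn_trans lt_b (ltn_ord _).
pose c : 'I_(x.+1) := Ordinal lt_c.
(* No value bids in [c, beta v1): smaller values bid at most beta v,
   larger ones at least beta v1. *)
have eqW : W c = W (beta v1).
  apply: W_ext => w /=; case: (leqP w v) => [le_wv | lt_vw].
    have le_b := optimal_bid_mono le_wv.
    by rewrite ltnS le_b; apply/esym/(leq_ltn_trans le_b)/ltnW.
  have le_b : (beta v1 <= beta w)%N by apply: optimal_bid_mono; rewrite ev1.
  by rewrite ltnNge (leq_trans (ltnW lt_b) le_b) ltnNge le_b.
apply: (optimal_not_dearer (lt_b : (c < beta v1)%N) eqW).
exact: (W_pos c v (ltnSn _)).
Qed.

End OptimalBidding.

Section FirstPriceAuction.

Context {R : realFieldType} {n x : nat} {p : 'I_(x.+1) -> R}.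
Hypothesis p_gt0 : forall v, 0 < p v.
Implicit Types (bj : bidfun x) (w c : 'I_(x.+1)).

Lemma prob_below_ge0 bj c : 0 <= prob_below p bj c.
Proof. by apply: sumr_ge0 => w _; apply: ltW. Qed.

Lemma prob_below_gt0 bj c w : (bj w < c)%N -> 0 < prob_below p bj c.
Proof.
move=> lt_w; rewrite /prob_below (bigD1 w) //=.
by apply: ltr_pwDl => //; apply: sumr_ge0 => u _; apply: ltW.
Qed.

Lemma prob_below_mono bj c c' : (c <= c')%N -> prob_below p bj c <= prob_below p bj c'.
Proof.
move=> le_cc'; rewrite /prob_below [X in _ <= X]big_mkcond [X in X <= _]big_mkcond.
apply: ler_sum => u _; case: ifP => [lt_u | _]; first by rewrite (leq_trans lt_u le_cc').
by case: ifP => _ //; apply: ltW.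
Qed.

Lemma win_prob_upd (B : profile n x) i b c :
  win_prob p (upd B i b) i c = win_prob p B i c.
Proof. by apply: eq_bigr => j /negbTE nji; rewrite /upd nji. Qed.

(* Since every value has positive probability, a best response is optimal
   value by value: deviating at the single value w cannot help. *)
Lemma best_response_pointwise (B : profile n x) i :
  (forall b, payoff p (upd B i b) i <= payoff p B i) ->
  forall w c,
    ((w : nat)%:R - (c : nat)%:R) * win_prob p B i c
      <= ((w : nat)%:R - (B i w : nat)%:R) * win_prob p B i (B i w).
Proof.
move=> best w c; pose b u := if u == w then c else B i u.
have := best b; rewrite /payoff (bigD1 w) //= [X in _ <= X](bigD1 w) //=.
have upd_i : upd B i b i = b by rewrite /upd eqxx.
have b_w : b w = c by rewrite /b eqxx.
rewrite upd_i win_prob_upd b_w.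
rewrite (eq_bigr (fun u => p u * (((u : nat)%:R - (B i u : nat)%:R)
                                   * win_prob p B i (B i u)))); last first.
  by move=> u /negbTE nuw; rewrite /b nuw win_prob_upd.
by rewrite lerD2r ler_pM2l.
Qed.

End FirstPriceAuction.

Theorem lemma4 (R : realFieldType) (n x : nat) (p : 'I_(x.+1) -> R)
  (beta : 'I_(x.+1) -> 'I_(x.+1)) :
  (2 <= n)%N ->
  (forall v, 0 < p v) -> \sum_(v : 'I_(x.+1)) p v = 1 ->
  symmetric_equilibrium n p beta ->
  forall v v1 : 'I_(x.+1), (v1 : nat) = (v : nat).+1 ->
    (beta v1 <= (beta v).+1)%N.
Proof.
move=> n_ge2 p_gt0 _ [best _] v v1 ev1.
pose i : 'I_n := Ordinal (ltnW n_ge2).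
pose B : profile n x := fun _ => beta.
pose W := win_prob p B i.
have opt := best_response_pointwise p_gt0 B i (best i).
have W_mono (c c' : 'I_(x.+1)) : (c <= c')%N -> W c <= W c'.
  move=> le_cc'; apply: ler_prod => j _.
  by rewrite prob_below_ge0 //; apply: prob_below_mono.
have W_pos (c w : 'I_(x.+1)) : (beta w < c)%N -> 0 < W c.
  by move=> lt_w; apply: prodr_gt0 => j _; apply: prob_below_gt0 lt_w.
have W_ext (c c' : 'I_(x.+1)) : (forall w, (beta w < c)%N = (beta w < c')%N) -> W c = W c'.
  by move=> same; apply: eq_bigr => j _; apply: eq_bigl => u; apply: same.
exact: (optimal_bid_step opt W_mono W_pos W_ext v v1 ev1).
Qed.
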